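(* Let $b\ge2$ be an integer. (1) For any subset $S$ of $\mathbb{Z}$ with $|S|\ge n$ (allowing $n=+\infty$) and any $S$-test sequence $\mathbf{s}=(s_i)_{i=0}^n$, one has for $1\le m<n$ $$\sum_{k=1}^m\alpha_k(S,b,\mathbf{s})\ \ge\ \sum_{k=1}^m\alpha_k(S,b).$$ (2) Given a fixed $N\ge1$, if the $S$-test sequence $(s_i)_{i=0}^N$ is the initial part of a $b$-ordering of $S$, then equality holds in the inequality of (1) for $1\le m\le N$.
   Context: For an integer $b\ge2$ and $a\in\mathbb{Z}$, $\operatorname{ord}_b(a)$ is the largest $k\in\mathbb{N}$ with $b^k\mid a$, and $\operatorname{ord}_b(0)=+\infty$. For nonempty $S\subseteq\mathbb{Z}$, an $S$-test sequence is any (finite or infinite) sequence $\mathbf{s}=(s_i)$ of elements of $S$, repetitions allowed; its $b$-exponent values are $\alpha_k(S,b,\mathbf{s}):=\sum_{j=0}^{k-1}\operatorname{ord}_b(s_k-s_j)$. A $b$-ordering of $S$ is an infinite $S$-test sequence $(a_i)_{i\ge0}$ such that for every $i\ge1$, $a_i$ attains $\min_{a'\in S}\sum_{j=0}^{i-1}\operatorname{ord}_b(a'-a_j)$. The $b$-exponent sequence of $S$ is $\alpha_k(S,b):=\alpha_k(S,b,\mathbf{a})$ for any $b$-ordering $\mathbf{a}$ of $S$; this does not depend on the choice of $b$-ordering. *)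

From mathcomp Require Import all_boot all_algebra.
Set Implicit Arguments. Unset Strict Implicit. Unset Printing Implicit Defensive.

Inductive enat := Fin of nat | Inf.

Definition eadd (x y : enat) : enat :=
  match x, y with Fin a, Fin c => Fin (a + c) | _, _ => Inf end.

Definition ele (x y : enat) : bool :=
  match x, y with
  | _, Inf => true
  | Inf, Fin _ => false
  | Fin a, Fin c => (a <= c)%N
  end.

Definition elt (x y : enat) : bool :=
  match x, y with
  | Fin _, Inf => true
  | Fin a, Fin c => (a < c)%N
  | _, _ => false
  end.

(* ord_b(a): the largest k with b^k | a, and +oo for a = 0.
   For b >= 2 and a <> 0, any such k satisfies k <= |a|, so the bounded
   maximum below is exactly the largest such k. *)
Definition ordb (b : nat) (a : int) : enat :=
  if a == 0%R then Inf
  else Fin (\max_(k < (absz a).+1 | (b ^ k %| absz a)%N) k).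

Definition alpha (b : nat) (s : nat -> int) (k : nat) : enat :=
  \big[eadd/Fin 0]_(j < k) ordb b (s k - s j)%R.

Definition alpha_sum (b : nat) (s : nat -> int) (m : nat) : enat :=
  \big[eadd/Fin 0]_(1 <= k < m.+1) alpha b s k.

Definition is_b_ordering (S : int -> Prop) (b : nat) (a : nat -> int) : Prop :=
  (forall i, S (a i)) /\
  (forall i, (1 <= i)%N -> forall a', S a' ->
     ele (\big[eadd/Fin 0]_(j < i) ordb b (a i - a j)%R)
         (\big[eadd/Fin 0]_(j < i) ordb b (a' - a j)%R)).

Definition has_at_least (S : int -> Prop) (k : nat) : Prop :=
  exists l : seq int, [/\ uniq l, size l = k & forall x, x \in l -> S x].

Definition card_ge (S : int -> Prop) (n : enat) : Prop :=
  forall k, ele (Fin k) n -> has_at_least S k.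

From mathcomp Require Import all_boot all_algebra.
From HB Require Import structures.
From mathcomp Require Import zify.
Set Implicit Arguments. Unset Strict Implicit. Unset Printing Implicit Defensive.
Import GRing.Theory.

(* Write P(L) for the sum of ord_b(x - y) over the unordered pairs of a finite
   list L, so that alpha_1(s) + ... + alpha_m(s) = P(s_0, ..., s_m).  The whole
   theorem reduces to: the initial segments of a b-ordering minimise P among
   lists of elements of S of the same length.  Inductively it suffices, given
   |A| < |L|, to find x in L whose b-adic distance to A, sum_{y in A} ord_b(x - y),
   is at most its distance to L minus x; greediness of the ordering then closes
   the step.  Since ord_b(z) counts the k >= 1 with b^k | z, such an x exists as
   soon as, for every level k, L has more elements than A congruent to x modulo
   b^k.  This x is found by descending through nested residue classes: if L
   outnumbers A in a class modulo b^k, it outnumbers A in one of its subclasses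
   modulo b^(k+1). *)

Lemma eaddA : associative eadd. Proof. by case=> [a|] [c|] [d|] //=; rewrite addnA. Qed.
Lemma eaddC : commutative eadd. Proof. by case=> [a|] [c|] //=; rewrite addnC. Qed.
Lemma add0e : left_id (Fin 0) eadd. Proof. by case. Qed.
HB.instance Definition _ := Monoid.isComLaw.Build enat (Fin 0) eadd eaddA eaddC add0e.

Lemma eaddACA : interchange eadd eadd.
Proof. by case=> [?|] [?|] [?|] [?|] //=; congr Fin; lia. Qed.

Lemma ele_Inf x : ele x Inf. Proof. by case: x. Qed.
Lemma ele0 x : ele (Fin 0) x. Proof. by case: x. Qed.

Lemma ele_trans x y z : ele x y -> ele y z -> ele x z.
Proof. by case: x => [?|]; case: y => [?|]; case: z => [?|] //=; apply: leq_trans. Qed.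

Lemma ele_add x1 y1 x2 y2 : ele x1 y1 -> ele x2 y2 -> ele (eadd x1 x2) (eadd y1 y2).
Proof. by case: x1 => [?|]; case: y1 => [?|]; case: x2 => [?|]; case: y2 => [?|] //=; apply: leq_add. Qed.

Lemma ele_anti x y : ele x y -> ele y x -> x = y.
Proof. by case: x => [?|]; case: y => [?|] //= h1 h2; congr Fin; apply/eqP; rewrite eqn_leq h1 h2. Qed.

Lemma big_eadd_Fin (T : Type) (l : seq T) (f : T -> nat) :
  \big[eadd/Fin 0]_(y <- l) Fin (f y) = Fin (\sum_(y <- l) f y).
Proof. by elim: l => [|y l IH]; rewrite ?big_nil // !big_cons IH. Qed.

Definition congb (b k : nat) (x y : int) : bool := (b ^ k %| `|(x - y)%R|)%N.
Definition ncong (b k : nat) (l : seq int) (x : int) : nat := count (congb b k x) l.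

Lemma congb_refl b k : reflexive (congb b k).
Proof. by move=> x; rewrite /congb subrr dvdn0. Qed.

Lemma congb_sym b k : symmetric (congb b k).
Proof. by move=> x y; rewrite /congb -opprB abszN. Qed.

Lemma congb_trans b k : transitive (congb b k).
Proof.
move=> y x z hxy hyz; have : ((b ^ k)%:Z %| ((x - y) + (y - z))%R)%Z by apply: rpredD.
by rewrite addrA subrK.
Qed.

Lemma congbS b k x y : congb b k.+1 x y -> congb b k x y.
Proof. by apply: dvdn_trans; rewrite dvdn_exp2l. Qed.

Lemma ncong0 b l x : ncong b 0 l x = size l.
Proof. by rewrite -count_predT; apply: eq_count => y; rewrite /congb dvd1n. Qed.

Lemma eq_ncong b k l x y : congb b k x y -> ncong b k l x = ncong b k l y.
Proof.
move=> cxy; apply: eq_count => z /=; apply/idP/idP; apply: congb_trans => //.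
by rewrite congb_sym.
Qed.

Lemma leq_size_by_classes (T : eqType) (e : rel T) :
  reflexive e -> symmetric e -> transitive e ->
  forall L A : seq T, (forall x, x \in L -> count (e x) L <= count (e x) A) ->
  size L <= size A.
Proof.
move=> e_refl e_sym e_trans L; have [n] := ubnP (size L).
elim: n L => [|n IH] [|x L] // /ltnSE size_L A classes.
rewrite -(count_predC (e x) (x :: L)) -(count_predC (e x) A) -!size_filter.
apply: leq_add; first by rewrite !size_filter; apply: classes; rewrite mem_head.
have outside_x s z : ~~ e x z -> count (e z) [seq y <- s | ~~ e x y] = count (e z) s.
  move=> nxz; rewrite count_filter; apply: eq_count => y /=.
  by case ezy: (e z y) => //=; apply: contra nxz => /e_trans; apply; rewrite e_sym.
apply: IH.
  by rewrite /= e_refl /= size_filter (leq_ltn_trans (count_size _ _) size_L).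
move=> z; rewrite mem_filter => /andP [nxz zL]; rewrite !outside_x //.
exact: classes.
Qed.

Lemma ncong_lt_refine b k L A x0 : ncong b k A x0 < ncong b k L x0 ->
  exists2 x, x \in L & congb b k x0 x && (ncong b k.+1 A x < ncong b k.+1 L x).
Proof.
move=> lt_x0; apply/hasP; apply: contraLR lt_x0 => /hasPn no_finer; rewrite -leqNgt.
have in_class s z : congb b k x0 z ->
    count (congb b k.+1 z) [seq y <- s | congb b k x0 y] = ncong b k.+1 s z.
  move=> c0z; rewrite count_filter; apply: eq_count => y /=.
  by case: (boolP (congb b k.+1 z y)) => //= /congbS; apply: congb_trans.
rewrite /ncong -!size_filter.
apply: (leq_size_by_classes (@congb_refl b k.+1) (@congb_sym b k.+1) (@congb_trans b k.+1)).
move=> z; rewrite mem_filter => /andP [c0z zL]; rewrite !in_class //.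
by have := no_finer z zL; rewrite c0z -leqNgt.
Qed.

Lemma ncong_lt_chain b n k0 L A x0 : ncong b k0 A x0 < ncong b k0 L x0 ->
  exists2 x, x \in L & congb b k0 x0 x /\
    forall k, k0 <= k <= k0 + n -> ncong b k A x < ncong b k L x.
Proof.
elim: n k0 x0 => [|n IH] k0 x0 lt_x0.
  have [x xL /andP [c0x lt_x]] := ncong_lt_refine lt_x0.
  exists x => //; split=> // k; rewrite addn0 -eqn_leq => /eqP <-.
  by rewrite -!(eq_ncong _ c0x).
have [x1 _ /andP [c01 lt_x1]] := ncong_lt_refine lt_x0.
have [x xL [c1x lt_x]] := IH k0.+1 x1 lt_x1.
have c0x : congb b k0 x0 x by apply: congb_trans c01 (congbS c1x).
exists x => //; split=> // k /andP [le_k0k le_kn].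
have [<-|lt_k0k] := eqVneq k0 k; first by rewrite -!(eq_ncong _ c0x).
by apply: lt_x; rewrite ltn_neqAle lt_k0k le_k0k addSnnS.
Qed.

Lemma exists_ncong_lt b K L A : size A < size L ->
  exists2 x, x \in L & forall k, k <= K -> ncong b k A x < ncong b k L x.
Proof.
case: L => [|x0 L] // lt_size.
have lt_x0 : ncong b 0 A x0 < ncong b 0 (x0 :: L) x0 by rewrite !ncong0.
have [x xL [_ lt_x]] := ncong_lt_chain K lt_x0.
by exists x => // k le_kK; apply: lt_x.
Qed.

Lemma ordbC b (x y : int) : ordb b (x - y)%R = ordb b (y - x)%R.
Proof. by rewrite /ordb -opprB abszN oppr_eq0. Qed.

Lemma ordb0 b : ordb b 0%R = Inf. Proof. by rewrite /ordb eqxx. Qed.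

Lemma ordb_Fin b (a : int) : 1 < b -> a != 0%R ->
  exists2 v, ordb b a = Fin v & forall k, (b ^ k %| `|a|)%N = (k <= v).
Proof.
move=> b_gt1 a_neq0; rewrite /ordb (negbTE a_neq0).
set n := `|a|%N; have n_gt0 : 0 < n by rewrite absz_gt0.
set v := \max_(k < n.+1 | (b ^ k %| n)%N) k.
exists v => // k; apply/idP/idP => [dvd_k|le_kv].
  have lt_kn : k < n.+1 by have := dvdn_leq n_gt0 dvd_k; have := ltn_expl k b_gt1; lia.
  exact: (leq_bigmax_cond (F := fun k : 'I_n.+1 => (k : nat)) (Ordinal lt_kn)).
apply: dvdn_trans (dvdn_exp2l b le_kv) _.
apply: (big_ind (fun j => b ^ j %| n)%N) => // i j dvd_i dvd_j.
by rewrite /maxn; case: ltnP.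
Qed.

Lemma sum_index_leq v K : \sum_(1 <= k < K.+1) (k <= v : nat) = minn K v.
Proof.
elim: K => [|K IH]; first by rewrite big_geq // min0n.
by rewrite big_nat_recr //= IH; case: (leqP K.+1 v) => /=; lia.
Qed.

Lemma ordb_count_dvd b (a : int) K : 1 < b -> a != 0%R -> (`|a| <= K)%N ->
  ordb b a = Fin (\sum_(1 <= k < K.+1) (b ^ k %| `|a|)%N).
Proof.
move=> b_gt1 a_neq0 le_aK; have [v -> dvdE] := ordb_Fin b_gt1 a_neq0.
have le_va : v <= `|a|.
  have dvd_v : (b ^ v %| `|a|)%N by rewrite dvdE.
  have a_gt0 : 0 < `|a| by rewrite absz_gt0.
  by have := dvdn_leq a_gt0 dvd_v; have := ltn_expl v b_gt1; lia.
by congr Fin; under eq_bigr do rewrite dvdE; rewrite sum_index_leq; lia.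
Qed.

Definition ordb_from (b : nat) (l : seq int) (x : int) : enat :=
  \big[eadd/Fin 0]_(y <- l) ordb b (x - y)%R.

Fixpoint ordb_pairs (b : nat) (l : seq int) : enat :=
  if l is x :: l' then eadd (ordb_from b l' x) (ordb_pairs b l') else Fin 0.

Lemma ordb_from_Inf b l x : x \in l -> ordb_from b l x = Inf.
Proof. by move=> xl; rewrite /ordb_from (perm_big _ (perm_to_rem xl)) big_cons subrr ordb0. Qed.

Lemma ordb_from_count b K l x : 1 < b ->
  (forall y, y \in l -> y != x /\ (`|(x - y)%R| <= K)%N) ->
  ordb_from b l x = Fin (\sum_(1 <= k < K.+1) ncong b k l x).
Proof.
move=> b_gt1 l_ok; rewrite /ordb_from.
rewrite (eq_big_seq (fun y => Fin (\sum_(1 <= k < K.+1) congb b k x y))); last first.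
  move=> y /l_ok [y_neq_x le_K]; apply: ordb_count_dvd => //.
  by rewrite subr_eq0 eq_sym.
rewrite big_eadd_Fin exchange_big /=; congr Fin; apply: eq_bigr => k _.
by rewrite /ncong -sumn_count sumnE big_map.
Qed.

Lemma ordb_pairs_rem b L x : x \in L ->
  ordb_pairs b L = eadd (ordb_from b (rem x L) x) (ordb_pairs b (rem x L)).
Proof.
elim: L => [|y l IH] //= xL; have [<-|y_neq_x] := eqVneq y x; first by [].
have xl : x \in l by move: xL; rewrite inE eq_sym (negbTE y_neq_x).
rewrite (IH xl) /= {1}/ordb_from (perm_big _ (perm_to_rem xl)) big_cons.
by rewrite /ordb_from big_cons ordbC eaddACA.
Qed.

Lemma ordb_pairs_perm b l1 l2 : perm_eq l1 l2 -> ordb_pairs b l1 = ordb_pairs b l2.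
Proof.
elim: l1 l2 => [|x l1 IH] l2 p12; first by move: (perm_size p12) => /esym /size0nil ->.
have xl2 : x \in l2 by rewrite -(perm_mem p12) mem_head.
have p1r : perm_eq l1 (rem x l2).
  by rewrite -(perm_cons x) (perm_trans p12) // perm_to_rem.
by rewrite (ordb_pairs_rem b xl2) /= (IH _ p1r) /ordb_from (perm_big _ p1r).
Qed.

Lemma ordb_pairs_rcons b l x : ordb_pairs b (rcons l x) = eadd (ordb_from b l x) (ordb_pairs b l).
Proof. by rewrite (@ordb_pairs_perm b _ (x :: l)) // perm_rcons. Qed.

Lemma bounded_diff (l : seq int) :
  exists K, forall x y, x \in l -> y \in l -> (`|(x - y)%R| <= K)%N.
Proof.
exists (\max_(z <- l) `|z| + \max_(z <- l) `|z|)%N => x y xl yl.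
apply: leq_trans (leqD_dist x 0 y) _; rewrite subr0 sub0r abszN.
by apply: leq_add; apply: (leq_bigmax_seq (F := fun z => `|z|%N)).
Qed.

Lemma exists_ordb_from_le b L A : 1 < b -> size A < size L ->
  exists2 x, x \in L & ele (ordb_from b A x) (ordb_from b (rem x L) x).
Proof.
move=> b_gt1 lt_size; have [K le_K] := bounded_diff (L ++ A).
have [x xL lt_x] := @exists_ncong_lt b K _ _ lt_size.
exists x => //; have [x_rem|x_nrem] := boolP (x \in rem x L).
  by rewrite (ordb_from_Inf b x_rem) ele_Inf.
have ncongL k : ncong b k L x = (ncong b k (rem x L) x).+1.
  by rewrite /ncong (permP (perm_to_rem xL)) /= congb_refl.
have rem_ok y : y \in rem x L -> y != x /\ (`|(x - y)%R| <= K)%N.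
  move=> y_rem; split; first by apply: contraNneq x_nrem => y_eq; rewrite -y_eq in y_rem *.
  by apply: le_K; rewrite mem_cat ?xL // (mem_rem y_rem).
(* Distinct integers at distance at most K < b^K are never congruent modulo b^K. *)
have ncong_rem_K : ncong b K (rem x L) x = 0.
  apply/eqP; rewrite -leqn0 leqNgt -has_count; apply/hasPn => y /rem_ok [y_neq_x le_yK].
  apply/negP => /(dvdn_leq _); rewrite absz_gt0 subr_eq0 eq_sym y_neq_x => /(_ isT).
  by have := ltn_expl K b_gt1; lia.
have ncongA_K : ncong b K A x = 0.
  by have := lt_x K (leqnn K); rewrite ncongL ncong_rem_K; case: ncong.
have A_ok y : y \in A -> y != x /\ (`|(x - y)%R| <= K)%N.
  move=> yA; split; last by apply: le_K; rewrite mem_cat ?xL // yA orbT.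
  apply/eqP => y_eq; move/eqP: ncongA_K; rewrite -leqn0 leqNgt -has_count.
  by move/hasPn/(_ y yA); rewrite y_eq congb_refl.
rewrite (ordb_from_count b_gt1 A_ok) (ordb_from_count b_gt1 rem_ok) /=.
rewrite big_nat_cond [leqRHS]big_nat_cond; apply: leq_sum => k /andP [/andP [_ le_kK] _].
by have := lt_x k le_kK; rewrite ncongL ltnS.
Qed.

Lemma ordb_from_mkseq b s i z :
  ordb_from b (mkseq s i) z = \big[eadd/Fin 0]_(j < i) ordb b (z - s j)%R.
Proof.
rewrite /ordb_from /mkseq big_map.
have -> : iota 0 i = index_iota 0 i by rewrite /index_iota subn0.
by rewrite big_mkord.
Qed.

Lemma alpha_sumE b s m : alpha_sum b s m = ordb_pairs b (mkseq s m.+1).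
Proof.
elim: m => [|m IH]; first by rewrite /alpha_sum big_geq //= /ordb_from big_nil.
rewrite /alpha_sum big_nat_recr // -/(alpha_sum b s m) IH.
by rewrite (mkseqS s m.+1) ordb_pairs_rcons eaddC /alpha ordb_from_mkseq.
Qed.

Lemma ordb_pairs_ordering_min b S a m L : 1 < b -> is_b_ordering S b a ->
  size L = m.+1 -> (forall y, y \in L -> S y) ->
  ele (ordb_pairs b (mkseq a m.+1)) (ordb_pairs b L).
Proof.
move=> b_gt1 [_ a_greedy]; elim: m L => [|m IH] L size_L L_S.
  by rewrite /= /ordb_from big_nil ele0.
have lt_size : size (mkseq a m.+1) < size L by rewrite size_mkseq size_L.
have [x xL le_x] := exists_ordb_from_le b_gt1 lt_size.
rewrite mkseqS ordb_pairs_rcons (ordb_pairs_rem b xL); apply: ele_add.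
  by apply: ele_trans le_x; rewrite !ordb_from_mkseq; apply: a_greedy (L_S x xL).
apply: IH; first by rewrite size_rem // size_L.
by move=> y /mem_rem; apply: L_S.
Qed.

Lemma ordering_prefix_in b S a n y : is_b_ordering S b a -> y \in mkseq a n -> S y.
Proof. by case=> a_S _ /mapP [i _ ->]. Qed.

Theorem theorem3p5 (b : nat) (S : int -> Prop) :
  (2 <= b)%N -> (exists x, S x) ->
  (* (1) *)
  (forall (n : enat) (s : nat -> int) (a : nat -> int),
     card_ge S n ->
     (forall i, ele (Fin i) n -> S (s i)) ->
     is_b_ordering S b a ->
     forall m, (1 <= m)%N -> elt (Fin m) n ->
       ele (alpha_sum b a m) (alpha_sum b s m)) /\
  (* (2) *)
  (forall (N : nat) (s : nat -> int) (a0 a : nat -> int),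
     (1 <= N)%N ->
     is_b_ordering S b a0 -> (forall i, (i <= N)%N -> s i = a0 i) ->
     is_b_ordering S b a ->
     forall m, (1 <= m)%N -> (m <= N)%N ->
       alpha_sum b s m = alpha_sum b a m).
Proof.
move=> b_gt1 _; split.
  move=> n s a _ s_S a_ord m _ lt_mn; rewrite !alpha_sumE.
  apply: (ordb_pairs_ordering_min b_gt1 a_ord); first by rewrite size_mkseq.
  move=> y /mapP [i]; rewrite mem_iota add0n => lt_im ->; apply: s_S.
  by case: n lt_mn => //= n lt_mn; lia.
move=> N s a0 a _ a0_ord s_a0 a_ord m _ le_mN; rewrite !alpha_sumE.
have -> : mkseq s m.+1 = mkseq a0 m.+1.
  by apply/eq_in_map => i; rewrite mem_iota add0n => lt_im; apply: s_a0; lia.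
apply: ele_anti.
  apply: (ordb_pairs_ordering_min b_gt1 a0_ord); first by rewrite size_mkseq.
  by move=> y; apply: ordering_prefix_in a_ord.
apply: (ordb_pairs_ordering_min b_gt1 a_ord); first by rewrite size_mkseq.
by move=> y; apply: ordering_prefix_in a0_ord.
Qed.
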